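(* Let $P=\{x\in\mathbb R^n : Ax=b,\ Bx\le d\}$ with $A\in\mathbb R^{m_A\times n}$, $B\in\mathbb R^{m_B\times n}$ be a pointed polyhedron. Then the cone $$C_{A,B}=\{(x,y^+,y^-)\in\mathbb R^{n+2m_B} : Ax=0,\ Bx=y^+-y^-,\ y^+,y^-\ge 0\}$$ is pointed and is generated by a set of extreme rays $S\cup T'$, where: (1) $S:=\{(g,y^+,y^-) : g\in\mathcal C(A,B),\ y^+_i=\max\{(Bg)_i,0\},\ y^-_i=\max\{-(Bg)_i,0\}\ \text{for } i\le m_B\}$ (these give the circuits of $P$); (2) $T'$ is a subset of $T:=\{(0,y^+,y^-) : \text{for some } i\le m_B,\ y^+_i=y^-_i=1 \text{ and } y^+_j=y^-_j=0 \text{ for } j\ne i\}$ with $|T'|\le m_B$. That is, the extreme rays of $C_{A,B}$ are exactly the rays spanned by the elements of $S\cup T'$.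
   Context: $P$ is pointed means $\operatorname{rank}\binom{A}{B}=n$. The set of circuits $\mathcal C(A,B)$ of $P$ consists of all $g\in\ker(A)\setminus\{0\}$ normalized to coprime integer components for which $Bg$ is support-minimal over $\{Bx : x\in\ker(A)\setminus\{0\}\}$, i.e. no $x\in\ker(A)\setminus\{0\}$ satisfies $\operatorname{supp}(Bx)\subsetneq\operatorname{supp}(Bg)$. *)

From HB Require Import structures.
From mathcomp Require Import all_boot all_order all_algebra.
From mathcomp Require Import reals.
Set Implicit Arguments. Unset Strict Implicit. Unset Printing Implicit Defensive.
Import Order.TTheory GRing.Theory Num.Theory.
Local Open Scope ring_scope.

Section Defs.
Variable R : realType.

Definition supp m (v : 'cV[R]_m) : {set 'I_m} := [set i | v i 0 != 0].

Definition ratmx m k (M : 'M[rat]_(m, k)) : 'M[R]_(m, k) := map_mx (@ratr R) M.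
Definition intcv k (g : 'cV[int]_k) : 'cV[R]_k := map_mx (fun z : int => z%:~R) g.

Definition pointed_poly mA mB n (A : 'M[R]_(mA, n)) (B : 'M[R]_(mB, n)) : Prop :=
  \rank (col_mx A B) = n.

Definition circuit mA mB n (A : 'M[R]_(mA, n)) (B : 'M[R]_(mB, n))
    (g : 'cV[int]_n) : Prop :=
  [/\ g != 0,
      A *m intcv g = 0,
      (\big[gcdn/0%N]_(i < n) `|g i ord0|%N = 1)%N &
      ~ exists x : 'cV[R]_n,
          [/\ x != 0, A *m x = 0 & supp (B *m x) \proper supp (B *m intcv g)]].

Definition xpart n mB (z : 'cV[R]_(n + (mB + mB))) : 'cV[R]_n := usubmx z.
Definition yppart n mB (z : 'cV[R]_(n + (mB + mB))) : 'cV[R]_mB := usubmx (dsubmx z).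
Definition ympart n mB (z : 'cV[R]_(n + (mB + mB))) : 'cV[R]_mB := dsubmx (dsubmx z).
Definition triple n mB (x : 'cV[R]_n) (yp ym : 'cV[R]_mB) : 'cV[R]_(n + (mB + mB)) :=
  col_mx x (col_mx yp ym).

Definition coneC mA mB n (A : 'M[R]_(mA, n)) (B : 'M[R]_(mB, n))
    (z : 'cV[R]_(n + (mB + mB))) : Prop :=
  [/\ A *m xpart z = 0,
      B *m xpart z = yppart z - ympart z &
      forall i, 0 <= yppart z i 0 /\ 0 <= ympart z i 0].

Definition pointed_cone N (C : 'cV[R]_N -> Prop) : Prop :=
  forall z, C z -> C (- z) -> z = 0.

Definition extreme_ray N (C : 'cV[R]_N -> Prop) (r : 'cV[R]_N) : Prop :=
  [/\ r != 0, C r &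
      forall u v, C u -> C v -> r = u + v -> exists a : R, 0 <= a /\ u = a *: r].

Definition generates N (G C : 'cV[R]_N -> Prop) : Prop :=
  forall z, C z <-> exists (k : nat) (c : 'I_k -> R) (p : 'I_k -> 'cV[R]_N),
    (forall j, 0 <= c j /\ G (p j)) /\ z = \sum_(j < k) c j *: p j.

Definition Sset mA mB n (A : 'M[R]_(mA, n)) (B : 'M[R]_(mB, n))
    (z : 'cV[R]_(n + (mB + mB))) : Prop :=
  exists g : 'cV[int]_n, circuit A B g /\
    z = triple (intcv g)
               (\col_i Num.max ((B *m intcv g) i 0) 0)
               (\col_i Num.max (- (B *m intcv g) i 0) 0).

Definition Telem n mB (i : 'I_mB) : 'cV[R]_(n + (mB + mB)) :=
  triple 0 (\col_j (j == i)%:R) (\col_j (j == i)%:R).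

End Defs.

(* For x in ker A put lift x = (x, (Bx)^+, (Bx)^-).  A point (x, y+, y-) of C_{A,B}
   is lift x plus a nonnegative combination of the vectors of T, because
   y+ - (Bx)^+ = y- - (Bx)^- >= 0.  Every x in ker A is a sum of elementary vectors
   of ker A (those minimizing supp (B x)) that are sign-conformal to x under B, and
   lift is additive on such sums; as A and B are rational, the elementary vectors are
   positive multiples of circuits.  The vector of T indexed by i is redundant exactly
   when some x in ker A has supp (B x) = {i}, since it then equals lift x + lift (-x);
   the remaining generators span extreme rays, and every extreme ray of a cone is
   spanned by one of its generators.  Pointedness comes from rank (A; B) = n, i.e.
   from ker A and ker B meeting only in 0. *)

From HB Require Import structures.
From mathcomp Require Import all_boot all_order all_algebra.
From mathcomp Require Import reals.
From mathcomp Require Import ring lra boolp.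
Set Implicit Arguments.
Unset Strict Implicit.
Unset Printing Implicit Defensive.
Import Order.TTheory GRing.Theory Num.Theory.
Local Open Scope ring_scope.

Section MaxZero.
Variable R : realDomainType.
Implicit Types a b s x : R.

Lemma max0_subN x : Num.max x 0 - Num.max (- x) 0 = x.
Proof. by rewrite !maxEle oppr_le0; do 2 case: ifPn; rewrite -?ltNge; lra. Qed.

Lemma max0D_conformal a b : 0 <= a * (a + b) -> 0 <= b * (a + b) ->
  (a + b = 0 -> a = 0) -> Num.max (a + b) 0 = Num.max a 0 + Num.max b 0.
Proof.
move=> ha hb h0; rewrite !maxEle.
have [s0|s0] := eqVneq (a + b) 0.
  by have a0 := h0 s0; move: s0; rewrite a0 add0r => ->; rewrite lexx addr0.
by do 3 case: ifPn; rewrite -?ltNge; move: s0; rewrite neq_lt => /orP[]; nra.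
Qed.

Lemma max0_split (s p p' q q' : R) : 0 <= p -> 0 <= p' -> 0 <= q -> 0 <= q' ->
  Num.max s 0 = p + p' -> Num.max (- s) 0 = q + q' ->
  [/\ Num.max (p - q) 0 = p, Num.max (- (p - q)) 0 = q,
      0 <= (p - q) * s & (s = 0 -> p - q = 0)].
Proof.
move=> hp hp' hq hq'; rewrite !maxEle oppr_le0 opprB subr_le0.
by repeat case: ifPn; rewrite -?ltNge => *; split => *; nra.
Qed.

End MaxZero.

Section ConicHull.
Variables (R : numDomainType) (V : lmodType R).
Implicit Types (G C : V -> Prop) (z : V).

Definition conic_hull G z : Prop :=
  exists (k : nat) (c : 'I_k -> R) (p : 'I_k -> V),
    (forall j, 0 <= c j /\ G (p j)) /\ z = \sum_(j < k) c j *: p j.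

Definition is_cone C : Prop :=
  [/\ C 0, forall u v, C u -> C v -> C (u + v) &
      forall a u, 0 <= a -> C u -> C (a *: u)].

Lemma cone_sum C (I : Type) (r : seq I) (P : pred I) (F : I -> V) :
  is_cone C -> (forall i, P i -> C (F i)) -> C (\sum_(i <- r | P i) F i).
Proof. by case=> C0 CD _ CF; apply: big_ind. Qed.

Lemma conic_hull_gen G z : G z -> conic_hull G z.
Proof.
by exists 1%N, (fun _ => 1), (fun _ => z); split => //; rewrite big_ord1 scale1r.
Qed.

Lemma conic_hull_is_cone G : is_cone (conic_hull G).
Proof.
split.
- by exists 0%N, (fun _ => 0), (fun _ => 0); split => [[]|]; rewrite ?big_ord0.
- move=> _ _ [k1 [c1 [p1 [h1 ->]]]] [k2 [c2 [p2 [h2 ->]]]].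
  pose sp T (f1 : 'I_k1 -> T) f2 (i : 'I_(k1 + k2)) :=
    match split i with inl j => f1 j | inr j => f2 j end.
  exists (k1 + k2)%N, (sp _ c1 c2), (sp _ p1 p2); split.
    by move=> i; rewrite /sp; case: (split i) => j; [exact: h1|exact: h2].
  rewrite big_split_ord /sp; congr (_ + _); apply: eq_bigr => j _.
    by rewrite (unsplitK (inl j)).
  by rewrite (unsplitK (inr j)).
- move=> a _ a0 [k [c [p [h ->]]]]; exists k, (fun j => a * c j), p; split.
    by move=> j; have [c0 Gp] := h j; split => //; apply: mulr_ge0.
  by rewrite scaler_sumr; apply: eq_bigr => j _; rewrite scalerA.
Qed.

Lemma conic_hull_min G C : is_cone C -> (forall z, G z -> C z) ->
  forall z, conic_hull G z -> C z.
Proof.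
move=> hC GC _ [k [c [p [h ->]]]]; apply: cone_sum (hC) _ => j _.
by have [c0 Gp] := h j; case: hC => _ _ CZ; exact: CZ (GC _ Gp).
Qed.

End ConicHull.

Lemma extreme_ray_generator (R : realType) N (C G : 'cV[R]_N -> Prop) :
  is_cone C -> (forall z, G z -> C z) -> generates G C ->
  forall r, extreme_ray C r -> exists z, G z /\ exists2 a : R, 0 < a & r = a *: z.
Proof.
move=> hC GC hgen r [r0 Cr hr]; have [_ _ CZ] := hC.
have [k [c [p [hcp er]]]] := (hgen r).1 Cr.
have [j pj0] : exists j, c j *: p j != 0.
  apply: contrapT => hn; move: r0; rewrite er big1 ?eqxx // => j _.
  by apply/eqP; apply: contra_notT hn => ?; exists j.
have [cj_ge0 Gj] := hcp j.
rewrite (bigD1 j) //= in er.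
have Crest : C (\sum_(i < k | i != j) c i *: p i).
  by apply: cone_sum => // i _; have [? ?] := hcp i; apply/CZ/GC.
have [a [a_ge0 ea]] := hr _ _ (CZ _ _ cj_ge0 (GC _ Gj)) Crest er.
have a_gt0 : 0 < a.
  by rewrite lt_def a_ge0 andbT; apply: contraNneq pj0 => a0; rewrite ea a0 scale0r.
have cj_gt0 : 0 < c j.
  by rewrite lt_def cj_ge0 andbT; apply: contraNneq pj0 => ->; rewrite scale0r.
exists (p j); split => //; exists (c j / a); first exact: divr_gt0.
by rewrite mulrC -scalerA ea scalerA mulVf ?gt_eqF ?scale1r.
Qed.

Section Conformal.
Variables (R : realType) (m : nat).
Implicit Types u v w : 'cV[R]_m.

Definition conformal u w :=
  forall i, 0 <= u i 0 * w i 0 /\ (w i 0 = 0 -> u i 0 = 0).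

Lemma supp_eq0 u : (supp u == set0) = (u == 0).
Proof.
apply/eqP/eqP => [s0|->]; last by apply/setP => i; rewrite !inE mxE eqxx.
by apply/colP => i; apply/eqP; rewrite mxE; move/setP: s0 => /(_ i); rewrite !inE => /negbFE.
Qed.

Lemma suppZ a u : a != 0 -> supp (a *: u) = supp u.
Proof. by move=> a0; apply/setP => i; rewrite !inE mxE mulf_eq0 negb_or a0. Qed.

Lemma supp_sub0 u w : supp u \subset supp w -> forall i, w i 0 = 0 -> u i 0 = 0.
Proof.
move=> /subsetP uw i wi; apply/eqP; have := uw i; rewrite !inE wi eqxx.
by move=> h; apply/negPn/negP => /h.
Qed.

Lemma supp_elim w u i0 : supp w \subset supp u -> u i0 0 != 0 ->
  supp (w - (w i0 0 / u i0 0) *: u) \proper supp u.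
Proof.
move=> wu ui0; apply/properP; split; last by exists i0; rewrite !inE ?mxE ?divfK ?subrr ?eqxx.
apply/subsetP => i; rewrite !inE !mxE; have [wi0|wi] := eqVneq (w i 0) 0.
  by rewrite wi0 sub0r oppr_eq0 mulf_eq0 negb_or => /andP[].
by move=> _; move: (subsetP wu i); rewrite !inE; apply.
Qed.

Lemma conformal_refl w : conformal w w.
Proof. by move=> i; rewrite -expr2 sqr_ge0. Qed.

Lemma conformal_trans u v w : conformal u v -> conformal v w -> conformal u w.
Proof.
move=> uv vw i; have [uv_ge0 uv0] := uv i; have [vw_ge0 vw0] := vw i.
split; last by move=> /vw0 /uv0.
have [->|ui] := eqVneq (u i 0) 0; first by rewrite mul0r.
have : 0 < v i 0 ^+ 2 by rewrite exprn_even_gt0 //; apply: contra ui => /eqP/uv0->.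
nra.
Qed.

Lemma conformalN u w : conformal u w -> conformal (- u) (- w).
Proof.
move=> uw i; rewrite !mxE mulrNN; have [? uw0] := uw i; split => // /eqP.
by rewrite oppr_eq0 => /eqP/uw0 ->; rewrite oppr0.
Qed.

Lemma conformalZ a u w : 0 <= a -> conformal u w -> conformal (a *: u) w.
Proof.
move=> a0 uw i; rewrite mxE -mulrA; have [? uw0] := uw i.
by split; [apply: mulr_ge0 | move=> /uw0 ->; rewrite mulr0].
Qed.

Lemma conformal_supp u w : conformal u w -> supp u \subset supp w.
Proof.
by move=> uw; apply/subsetP => i; rewrite !inE; apply: contra => /eqP/(proj2 (uw i))->.
Qed.

Lemma conformal_shrink_pos w v i0 : supp v \subset supp w -> 0 < w i0 0 / v i0 0 ->
  exists2 t, 0 < t & conformal (w - t *: v) w /\ supp (w - t *: v) \proper supp w.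
Proof.
move=> /supp_sub0 vw h0.
have [j t_gt0 tmin] := @arg_minP _ _ _ i0 (fun i => 0 < w i 0 / v i 0)
  (fun i => w i 0 / v i 0) h0.
set t := w j 0 / v j 0 in t_gt0 tmin.
have vj : v j 0 != 0 by apply: contraTneq t_gt0 => vj0; rewrite /t vj0 invr0 mulr0 ltxx.
have cf : conformal (w - t *: v) w.
  move=> i; rewrite !mxE; split; last by move=> wi; rewrite wi (vw _ wi) mulr0 subrr.
  have [->|vi] := eqVneq (v i 0) 0; first by rewrite mulr0 subr0 -expr2 sqr_ge0.
  have -> : w i 0 = w i 0 / v i 0 * v i 0 by rewrite divfK.
  set r := w i 0 / v i 0.
  (* either [r <= 0 < t] or, by minimality of [t], [t <= r] *)
  have rt : 0 <= r * (r - t).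
    by have [r_gt0|] := ltP 0 r; [have := tmin i r_gt0; rewrite -/r | ]; nra.
  have -> : (r * v i 0 - t * v i 0) * (r * v i 0) = r * (r - t) * v i 0 ^+ 2 by ring.
  by apply: mulr_ge0; rewrite ?sqr_ge0.
exists t => //; split => //; apply/properP; split; first exact: conformal_supp.
exists j; rewrite inE; last by rewrite !mxE /t divfK // subrr eqxx.
by apply: contraTneq t_gt0 => wj0; rewrite /t wj0 mul0r ltxx.
Qed.

Lemma conformal_shrink w v : supp v \subset supp w -> v != 0 ->
  exists t, conformal (w - t *: v) w /\ supp (w - t *: v) \proper supp w.
Proof.
move=> vw /cV0Pn [i vi].
have wi : w i 0 != 0 by move: (subsetP vw i); rewrite !inE; apply.
have [pos|neg] := ltP 0 (w i 0 / v i 0).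
  by have [t _ ?] := conformal_shrink_pos vw pos; exists t.
have vw' : supp (- v) \subset supp w by rewrite -scaleN1r suppZ ?oppr_eq0 ?oner_eq0.
have : 0 < w i 0 / (- v) i 0.
  by rewrite mxE invrN mulrN oppr_gt0 lt_neqAle neg mulf_neq0 ?invr_eq0.
move=> /(conformal_shrink_pos vw') [t _ ?]; exists (- t).
by rewrite scaleNr -scalerN.
Qed.

Definition pos_part u : 'cV[R]_m := \col_i Num.max (u i 0) 0.
Definition neg_part u : 'cV[R]_m := \col_i Num.max (- u i 0) 0.

Lemma pos_partE u i : pos_part u i 0 = Num.max (u i 0) 0.
Proof. exact: mxE. Qed.

Lemma neg_partE u i : neg_part u i 0 = Num.max (- u i 0) 0.
Proof. exact: mxE. Qed.

Lemma neg_part_pos u : neg_part u = pos_part (- u).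
Proof. by apply/colP => i; rewrite !mxE. Qed.

Lemma pos_part_subN u : pos_part u - neg_part u = u.
Proof. by apply/colP => i; rewrite !mxE max0_subN. Qed.

Lemma pos_part_ge0 u i : 0 <= pos_part u i 0.
Proof. by rewrite mxE le_max lexx orbT. Qed.

Lemma pos_partZ a u : 0 <= a -> pos_part (a *: u) = a *: pos_part u.
Proof. by move=> a0; apply/colP => i; rewrite !mxE maxr_pMr // mulr0. Qed.

Lemma pos_partD u v : conformal u (u + v) -> conformal v (u + v) ->
  pos_part (u + v) = pos_part u + pos_part v.
Proof.
move=> cu cv; apply/colP => i; rewrite !mxE.
have [+ u0] := cu i; have [+ _] := cv i; rewrite !mxE => ? ?.
by apply: max0D_conformal => // s0; apply: u0; rewrite mxE.
Qed.

End Conformal.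

Lemma mulmx_full_rank_eq0 (F : fieldType) m k (M : 'M[F]_(m, k)) (x : 'cV[F]_k) :
  \rank M = k -> M *m x = 0 -> x = 0.
Proof.
move=> rM Mx; have fr : row_free M^T by rewrite /row_free mxrank_tr rM.
by apply/trmx_inj/(row_free_inj fr); rewrite -trmx_mul Mx !trmx0 mul0mx.
Qed.

Lemma ratmx_ker_neq0 (R : realType) m k (M0 : 'M[rat]_(m, k)) (y : 'cV[R]_k) :
  y != 0 -> ratmx R M0 *m y = 0 -> exists2 q : 'cV[rat]_k, q != 0 & M0 *m q = 0.
Proof.
move=> y0 My.
have rM : (\rank M0 < k)%N.
  rewrite ltn_neqAle rank_leq_col andbT; apply: contra y0 => /eqP rM.
  by rewrite (mulmx_full_rank_eq0 _ My) // mxrank_map.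
have /matrix0Pn [i [j Kij]] : cokermx M0 != 0.
  by rewrite -mxrank_eq0 mxrank_coker subn_eq0 -ltnNge.
exists (col j (cokermx M0)); last by rewrite colE mulmxA mulmx_coker mul0mx.
by apply/cV0Pn; exists i; rewrite mxE.
Qed.

Lemma rat_common_denom k (q : 'I_k -> rat) :
  exists (D : int) (h : 'I_k -> int), 0 < D /\ forall i, (h i)%:~R = q i * D%:~R.
Proof.
exists (\prod_j denq (q j)), (fun i => numq (q i) * \prod_(j | j != i) denq (q j)).
split; first by apply: prodr_gt0 => j _; apply: denq_gt0.
by move=> i; rewrite [in RHS](bigD1 i) //= !intrM numqE mulrA.
Qed.

Lemma int_primitive k (h : 'I_k -> int) i0 : h i0 != 0 ->
  exists (d : nat) (g : 'I_k -> int),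
    [/\ (0 < d)%N, forall i, h i = g i * d%:Z & (\big[gcdn/0]_(i < k) `|g i|)%N = 1%N].
Proof.
move=> hi0; set d := (\big[gcdn/0]_(i < k) `|h i|)%N.
have d_dvd i : (d %| `|h i|)%N by rewrite /d (bigD1 i) //= dvdn_gcdl.
have d_gt0 : (0 < d)%N.
  by rewrite lt0n; apply: contraNneq hi0 => d0; move: (d_dvd i0); rewrite d0 dvd0n absz_eq0.
have hE i : h i = (h i %/ d%:Z)%Z * d%:Z by rewrite divzK // dvdzE absz_nat.
exists d, (fun i => (h i %/ d%:Z)%Z); split => //.
apply/eqP; rewrite -(eqn_pmul2r d_gt0) mul1n; apply/eqP.
rewrite (big_morph (muln^~ d) (fun a b => muln_gcdl a b d) (mul0n d)).
by rewrite /d; apply: eq_bigr => i _; rewrite [in RHS]hE abszM absz_nat.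
Qed.

Lemma rat_cV_int_scale k (q : 'cV[rat]_k) : q != 0 ->
  exists (g : 'cV[int]_k) (c : rat),
    [/\ 0 < c, forall i, q i 0 = c * (g i 0)%:~R &
         (\big[gcdn/0]_(i < k) `|g i ord0|)%N = 1%N].
Proof.
move=> /cV0Pn [i0 qi0]; have [D [h [D_gt0 hE]]] := rat_common_denom (fun i => q i 0).
have D0 : D%:~R != 0 :> rat by rewrite intr_eq0 gt_eqF.
have hi0 : h i0 != 0 by rewrite -(intr_eq0 rat) hE mulf_neq0.
have [d [g [d_gt0 hg gg]]] := int_primitive hi0.
exists (\col_i g i), (d%:Z%:~R / D%:~R); split.
- by rewrite divr_gt0 ?ltr0z.
- by move=> i; rewrite mxE; apply: (mulIf D0); rewrite -hE hg intrM; field.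
- by under eq_bigr do rewrite mxE.
Qed.

Section Lift.
Variables (R : realType) (mB n : nat) (B : 'M[R]_(mB, n)).
Implicit Types (x : 'cV[R]_n) (p q : 'cV[R]_mB).

Lemma triple_eta (z : 'cV[R]_(n + (mB + mB))) : z = triple (xpart z) (yppart z) (ympart z).
Proof. by rewrite /triple /xpart /yppart /ympart !vsubmxK. Qed.

Lemma triple_inj x x' p q p' q' :
  triple x p q = triple x' p' q' -> [/\ x = x', p = p' & q = q'].
Proof. by move=> /eq_col_mx [-> /eq_col_mx [-> ->]]. Qed.

Lemma tripleD x x' p q p' q' :
  triple x p q + triple x' p' q' = triple (x + x') (p + p') (q + q').
Proof. by rewrite /triple !add_col_mx. Qed.

Lemma tripleZ a x p q : a *: triple x p q = triple (a *: x) (a *: p) (a *: q).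
Proof. by rewrite /triple !scale_col_mx. Qed.

Lemma triple0 : triple 0 0 0 = 0 :> 'cV[R]_(n + (mB + mB)).
Proof. by rewrite /triple !col_mx0. Qed.

Definition lift x := triple x (pos_part (B *m x)) (neg_part (B *m x)).

Lemma liftZ a x : 0 <= a -> lift (a *: x) = a *: lift x.
Proof.
move=> a0; rewrite /lift tripleZ -scalemxAr pos_partZ // !neg_part_pos -scalerN.
by rewrite pos_partZ.
Qed.

Lemma lift0 : lift 0 = 0.
Proof. by rewrite -(scale0r (0 : 'cV[R]_n)) liftZ // scale0r. Qed.

Lemma liftD x x' : conformal (B *m x) (B *m (x + x')) ->
  conformal (B *m x') (B *m (x + x')) -> lift (x + x') = lift x + lift x'.
Proof.
rewrite /lift tripleD mulmxDr => cx cx'.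
by rewrite pos_partD // !neg_part_pos opprD pos_partD // -opprD; apply: conformalN.
Qed.

End Lift.

Section Cone.
Variables (R : realType) (mA mB n : nat) (A : 'M[R]_(mA, n)) (B : 'M[R]_(mB, n)).
Implicit Types (x y : 'cV[R]_n) (p q : 'cV[R]_mB).
Hypothesis kerAB0 : forall x, A *m x = 0 -> B *m x = 0 -> x = 0.

Definition elementary x := [/\ x != 0, A *m x = 0 &
  ~ exists y, [/\ y != 0, A *m y = 0 & supp (B *m y) \proper supp (B *m x)]].

Lemma kerA_mulB_neq0 x : x != 0 -> A *m x = 0 -> B *m x != 0.
Proof. by move=> x0 ax; apply: contra x0 => /eqP bx; apply/eqP; apply: kerAB0. Qed.

Lemma elementary_scale y x : elementary y -> A *m x = 0 ->
  supp (B *m x) \subset supp (B *m y) -> exists l, x = l *: y.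
Proof.
case=> y0 ay ymin ax xy; have /cV0Pn [i0 yi0] := kerA_mulB_neq0 y0 ay.
exists ((B *m x) i0 0 / (B *m y) i0 0); apply/eqP; rewrite -subr_eq0.
apply: contrapT => /negP z0; apply: ymin; exists (x - (B *m x) i0 0 / (B *m y) i0 0 *: y).
rewrite !mulmxBr -!scalemxAr ax ay scaler0 subrr; split => //; exact: supp_elim.
Qed.

Lemma elementary_conformal x : x != 0 -> A *m x = 0 ->
  exists y, elementary y /\ conformal (B *m y) (B *m x).
Proof.
move: {2}#|_| (leqnn #|supp (B *m x)|) => k; elim: k x => [|k IH] x sBx x0 ax;
  (have [ex|nex] := pselect (elementary x);
     first by exists x; split; last exact: conformal_refl);
  have [v [v0 av vx]] : exists v, [/\ v != 0, A *m v = 0 & supp (B *m v) \proper supp (B *m x)]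
    by apply: contrapT => h; apply: nex.
  by move: (proper_card vx); rewrite ltnNge (leq_trans sBx).
have [t [cf sub]] := conformal_shrink (proper_sub vx) (kerA_mulB_neq0 v0 av).
have Bx' : B *m (x - t *: v) = B *m x - t *: (B *m v) by rewrite mulmxBr scalemxAr.
have x'0 : x - t *: v != 0.
  apply: contraTneq vx => /eqP; rewrite subr_eq0 => /eqP xE.
  have t0 : t != 0 by apply: contra x0; rewrite xE => /eqP->; rewrite scale0r.
  by rewrite xE -scalemxAr suppZ // properxx.
have ax' : A *m (x - t *: v) = 0 by rewrite mulmxBr -scalemxAr ax av scaler0 subrr.
have [|y [ey cy]] := IH _ _ x'0 ax'; first by rewrite Bx' -ltnS (leq_trans (proper_card sub)).
by exists y; split => //; apply: conformal_trans cy _; rewrite Bx'.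
Qed.

Lemma lift_conic_hull G : (forall y, elementary y -> conic_hull G (lift B y)) ->
  forall x, A *m x = 0 -> conic_hull G (lift B x).
Proof.
move=> Gel x; have [hull0 hullD hullZ] := conic_hull_is_cone G.
move: {2}#|_| (leqnn #|supp (B *m x)|) => k; elim: k x => [|k IH] x sBx ax;
  (have [->|x0] := eqVneq x 0; first by rewrite lift0).
  by move: (kerA_mulB_neq0 x0 ax); rewrite -supp_eq0 -cards_eq0 -leqn0 sBx.
have [y [ey cf]] := elementary_conformal x0 ax; have [y0 ay _] := ey.
have /cV0Pn [i0 yi0] := kerA_mulB_neq0 y0 ay.
have ratio : 0 < (B *m x) i0 0 / (B *m y) i0 0.
  have [cf_ge0 cf0] := cf i0.
  have xi0 : (B *m x) i0 0 != 0 by apply: contra yi0 => /eqP/cf0 ->.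
  have -> : (B *m x) i0 0 / (B *m y) i0 0 = (B *m y) i0 0 * (B *m x) i0 0 / (B *m y) i0 0 ^+ 2.
    by field.
  by rewrite divr_gt0 ?exprn_even_gt0 // lt_def mulf_neq0.
have [t t_gt0 [cf' sub]] := conformal_shrink_pos (conformal_supp cf) ratio.
have Bx' : B *m (x - t *: y) = B *m x - t *: (B *m y) by rewrite mulmxBr scalemxAr.
have ax' : A *m (x - t *: y) = 0 by rewrite mulmxBr -scalemxAr ax ay scaler0 subrr.
have -> : lift B x = lift B (x - t *: y) + t *: lift B y.
  rewrite -liftZ ?ltW // -liftD subrK ?Bx' // -scalemxAr.
  exact: conformalZ (ltW t_gt0) cf.
apply: hullD; last by apply: hullZ; [exact: ltW | exact: Gel].
by apply: IH ax'; rewrite Bx' -ltnS (leq_trans (proper_card sub)).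
Qed.

Lemma coneCE x p q : coneC A B (triple x p q) <->
  [/\ A *m x = 0, B *m x = p - q & forall i, 0 <= p i 0 /\ 0 <= q i 0].
Proof.
by rewrite /coneC /xpart /yppart /ympart /triple !(col_mxKu, col_mxKd).
Qed.

Lemma coneC_is_cone : is_cone (coneC A B).
Proof.
split.
- by rewrite -triple0; apply/coneCE; rewrite !mulmx0 subrr; split => // i; rewrite mxE.
- move=> u v; rewrite (triple_eta u) (triple_eta v).
  move: (xpart u) (yppart u) (ympart u) (xpart v) (yppart v) (ympart v).
  move=> x p q x' p' q'; rewrite tripleD !coneCE => -[ax bx pq] [ax' bx' pq'].
  rewrite !mulmxDr ax ax' bx bx' addr0 addrACA opprD; split => // i; rewrite !mxE.
  by have [? ?] := pq i; have [? ?] := pq' i; split; apply: addr_ge0.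
- move=> a u a0; rewrite (triple_eta u); move: (xpart u) (yppart u) (ympart u).
  move=> x p q; rewrite tripleZ !coneCE => -[ax bx pq].
  rewrite -!scalemxAr ax bx scalerBr scaler0; split => // i; rewrite !mxE.
  by have [? ?] := pq i; split; apply: mulr_ge0.
Qed.

Lemma coneC_pointed : pointed_cone (coneC A B).
Proof.
move=> z; rewrite (triple_eta z); move: (xpart z) (yppart z) (ympart z) => x p q.
rewrite -scaleN1r tripleZ !coneCE !scaleN1r => -[ax bx pq] [_ _ pqN].
have ge0_le0 (r : R) : 0 <= r -> 0 <= - r -> r = 0.
  by move=> r_ge0; rewrite oppr_ge0 => r_le0; apply/le_anti/andP.
have p0 : p = 0.
  by apply/colP => i; have [+ _] := pqN i; rewrite !mxE; apply/ge0_le0/(pq i).1.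
have q0 : q = 0.
  by apply/colP => i; have [_ +] := pqN i; rewrite !mxE; apply/ge0_le0/(pq i).2.
by rewrite p0 q0 (kerAB0 ax) ?triple0 // bx p0 q0 subr0.
Qed.

Lemma lift_coneC x : A *m x = 0 -> coneC A B (lift B x).
Proof.
move=> ax; apply/coneCE; split; rewrite ?pos_part_subN // => i.
by rewrite neg_part_pos !pos_part_ge0.
Qed.

Lemma TelemE i :
  Telem R n i = triple 0 (delta_mx i 0 : 'cV[R]_mB) (delta_mx i 0 : 'cV[R]_mB).
Proof. by congr triple; apply/colP => j; rewrite !mxE andbT. Qed.

Lemma Telem_coneC i : coneC A B (Telem R n i).
Proof.
rewrite TelemE; apply/coneCE; rewrite !mulmx0 subrr; split => // j.
by rewrite mxE ler0n.
Qed.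

Lemma sum_Telem (s : 'cV[R]_mB) :
  \sum_i s i 0 *: Telem R n i = triple 0 s s.
Proof.
have tripleDsym : {morph (fun w : 'cV[R]_mB => triple (0 : 'cV[R]_n) w w) : u v / u + v}.
  by move=> u v; rewrite tripleD addr0.
under eq_bigr => i _ do rewrite TelemE tripleZ scaler0.
rewrite -(big_morph _ tripleDsym (triple0 R mB n)); congr triple;
  by rewrite [RHS]matrix_sum_delta; apply: eq_bigr => i _; rewrite big_ord1.
Qed.

Lemma coneC_decomposition x p q : coneC A B (triple x p q) ->
  exists2 s : 'cV[R]_mB, (forall i, 0 <= s i 0) & triple x p q = lift B x + triple 0 s s.
Proof.
move=> /coneCE [_ bx pq]; exists (p - pos_part (B *m x)).
  move=> i; rewrite bx !mxE subr_ge0 ge_max; have [p_ge0 q_ge0] := pq i.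
  by rewrite p_ge0 lerBlDr lerDl q_ge0.
have := pos_part_subN (B *m x); rewrite {3}bx => pnE.
rewrite /lift tripleD addr0; congr triple; first by rewrite addrC subrK.
by rewrite addrCA -opprB pnE opprB addrC subrK.
Qed.

Lemma Telem_lift_split i x : A *m x = 0 -> supp (B *m x) = [set i] ->
  exists2 x', A *m x' = 0 & Telem R n i = lift B x' + lift B (- x').
Proof.
move=> ax sx; have bxi : (B *m x) i 0 != 0 by move: (set11 i); rewrite -sx inE.
exists (((B *m x) i 0)^-1 *: x); first by rewrite -scalemxAr ax scaler0.
have Bx' : B *m (((B *m x) i 0)^-1 *: x) = delta_mx i 0.
  apply/colP => j; rewrite -scalemxAr mxE [RHS]mxE andbT.
  have [->|ji] := eqVneq j i; first by rewrite mulVf.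
  have : j \notin supp (B *m x) by rewrite sx inE.
  by rewrite inE negbK => /eqP->; rewrite mulr0.
rewrite /lift tripleD mulmxN Bx' subrr TelemE; congr triple; apply/colP => j;
  rewrite !mxE andbT; case: (j == i);
  by rewrite ?opprK ?oppr0 !maxEle ?lexx ?ler10 ?lerN10 ?addr0 ?add0r.
Qed.

Lemma coneC_lift_summand y x p q v : coneC A B (triple x p q) -> coneC A B v ->
  lift B y = triple x p q + v -> triple x p q = lift B x /\ conformal (B *m x) (B *m y).
Proof.
rewrite (triple_eta v); move: (xpart v) (yppart v) (ympart v) => x' p' q'.
rewrite !coneCE tripleD {1}/lift => -[_ bx pq] [_ _ pq'] /triple_inj[_ ep eq].
have bxE i : (B *m x) i 0 = p i 0 - q i 0 by rewrite bx !mxE.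
have ep_i i : Num.max ((B *m y) i 0) 0 = p i 0 + p' i 0 by rewrite -pos_partE ep mxE.
have eq_i i : Num.max (- (B *m y) i 0) 0 = q i 0 + q' i 0 by rewrite -neg_partE eq mxE.
have split_i i := max0_split (pq i).1 (pq' i).1 (pq i).2 (pq' i).2 (ep_i i) (eq_i i).
split; last by move=> i; rewrite !bxE; have [] := split_i i.
by congr triple; apply/colP => i; rewrite ?pos_partE ?neg_partE bxE; have [] := split_i i.
Qed.

Lemma lift_extreme y : elementary y -> extreme_ray (coneC A B) (lift B y).
Proof.
move=> ey; have [y0 ay _] := ey; split; [|exact: lift_coneC|].
  by apply: contra y0 => /eqP; rewrite -(triple0 R mB n) => /triple_inj[->].
move=> u v; rewrite (triple_eta u); move: (xpart u) (yppart u) (ympart u) => x p q.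
move=> Cu Cv /(coneC_lift_summand Cu Cv) [-> cf]; have /coneCE [ax _ _] := Cu.
have [l xE] := elementary_scale ey ax (conformal_supp cf).
have /cV0Pn [i0 yi0] := kerA_mulB_neq0 y0 ay.
have l_ge0 : 0 <= l.
  have [+ _] := cf i0; rewrite xE -scalemxAr mxE -mulrA pmulr_lge0 //.
  by rewrite -expr2 exprn_even_gt0.
by exists l; rewrite xE liftZ.
Qed.

Lemma Telem_extreme i : ~ (exists x, A *m x = 0 /\ supp (B *m x) = [set i]) ->
  extreme_ray (coneC A B) (Telem R n i).
Proof.
move=> noI; split; [|exact: Telem_coneC|].
  rewrite TelemE -(triple0 R mB n); apply/eqP => /triple_inj[_ /colP/(_ i) + _].
  by rewrite !mxE !eqxx => /eqP; rewrite oner_eq0.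
move=> u v; rewrite (triple_eta u) (triple_eta v).
move: (xpart u) (yppart u) (ympart u) (xpart v) (yppart v) (ympart v) => x p q x' p' q'.
rewrite !coneCE TelemE tripleD => -[ax bx pq] [_ _ pq'] /triple_inj[_ ep eq].
have bxE j : (B *m x) j 0 = p j 0 - q j 0 by rewrite bx !mxE.
have off j : j != i -> p j 0 = 0 /\ q j 0 = 0.
  move=> ji; move/colP: ep => /(_ j); move/colP: eq => /(_ j).
  rewrite !mxE (negbTE ji) /=; have [? ?] := pq j; have [? ?] := pq' j.
  by move=> *; split; lra.
have Bx0 : B *m x = 0.
  have bxi : (B *m x) i 0 = 0.
    apply: contrapT => bxi; apply: noI; exists x; split => //; apply/setP => j.
    rewrite !inE; have [->|ji] := eqVneq j i; first exact/eqP.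
    by rewrite bxE; have [-> ->] := off j ji; rewrite subrr eqxx.
  apply/colP => j; rewrite [RHS]mxE; have [->|ji] := eqVneq j i => //.
  by rewrite bxE; have [-> ->] := off j ji; rewrite subrr.
have qE : q = p by apply/esym/eqP; rewrite -subr_eq0 -bx Bx0.
exists (p i 0); split; first by have [] := pq i.
have pE : p = p i 0 *: delta_mx i 0.
  apply/colP => j; rewrite !mxE andbT; have [->|ji] := eqVneq j i; first by rewrite mulr1.
  by rewrite mulr0; have [] := off j ji.
by rewrite (kerAB0 ax Bx0) qE tripleZ scaler0 -pE.
Qed.

Lemma coneC_conic_hull G (I : {set 'I_mB}) :
  (forall y, elementary y -> conic_hull G (lift B y)) ->
  (forall i, i \in I -> G (Telem R n i)) ->
  (forall i, i \notin I -> exists x, A *m x = 0 /\ supp (B *m x) = [set i]) ->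
  forall z, coneC A B z -> conic_hull G z.
Proof.
move=> Gel GI nI z; have hull := conic_hull_is_cone G; have [_ hullD hullZ] := hull.
have Glift := lift_conic_hull Gel.
rewrite (triple_eta z); move: (xpart z) (yppart z) (ympart z) => x p q Cz.
have [s s_ge0 ->] := coneC_decomposition Cz; have /coneCE [ax _ _] := Cz.
apply: (hullD); first exact: Glift.
rewrite -sum_Telem; apply: cone_sum hull _ => i _; apply: hullZ => //.
have [/GI/conic_hull_gen //|/nI [x1 [ax1 sx1]]] := boolP (i \in I).
have [x' ax' ->] := Telem_lift_split ax1 sx1.
by apply: hullD; apply: Glift; rewrite ?mulmxN ax' ?oppr0.
Qed.

Lemma circuit_elementary g : circuit A B g -> elementary (intcv R g).
Proof.
case=> g0 ag _ gmin; split => //.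
by have /matrix0Pn [i [j gij]] := g0; apply/matrix0Pn; exists i, j; rewrite mxE intr_eq0.
Qed.

Section Rational.
Variables (A0 : 'M[rat]_(mA, n)) (B0 : 'M[rat]_(mB, n)).
Hypotheses (AE : A = ratmx R A0) (BE : B = ratmx R B0).

(* The kernel vectors x of A with supp (B x) inside supp (B y) are the kernel of the
   rational matrix obtained by stacking A0 and the rows of B0 outside supp (B y). *)
Lemma elementary_rat y : elementary y ->
  exists2 q : 'cV[rat]_n, q != 0 & exists2 l : R, 0 < l & ratmx R q = l *: y.
Proof.
move=> ey; have [y0 ay _] := ey; set S := supp (B *m y).
pose d : 'rV[rat]_mB := \row_i (i \notin S)%:R.
have maskE x i : (diag_mx (map_mx ratr d) *m (B *m x)) i 0 = (i \notin S)%:R * (B *m x) i 0.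
  by rewrite mul_diag_mx mxE; congr (_ * _); rewrite !mxE rmorph_nat.
have ratM : ratmx R (col_mx A0 (diag_mx d *m B0)) = col_mx A (diag_mx (map_mx ratr d) *m B).
  by rewrite /ratmx map_col_mx map_mxM map_diag_mx AE BE.
have [q q0 Mq] : exists2 q : 'cV[rat]_n, q != 0 & col_mx A0 (diag_mx d *m B0) *m q = 0.
  apply: (ratmx_ker_neq0 y0); rewrite ratM mul_col_mx ay -mulmxA.
  apply/eqP; rewrite col_mx_eq0 eqxx /=; apply/eqP/colP => i; rewrite maskE [RHS]mxE.
  have [_|] := boolP (i \in S); first by rewrite mul0r.
  by rewrite /S inE negbK => /eqP->; rewrite mulr0.
have : ratmx R (col_mx A0 (diag_mx d *m B0)) *m ratmx R q = 0.
  by rewrite /ratmx -map_mxM Mq map_mx0.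
rewrite ratM mul_col_mx => /eqP; rewrite col_mx_eq0 => /andP[/eqP Aq /eqP Mq'].
have qS : supp (B *m ratmx R q) \subset S.
  apply/subsetP => i; rewrite inE; apply: contraR => iS.
  by move/colP: Mq' => /(_ i); rewrite -mulmxA maskE iS mul1r [RHS]mxE => ->; rewrite eqxx.
have [l qE] := elementary_scale ey Aq qS.
have l0 : l != 0.
  apply/eqP => l_eq0; move: q0.
  by rewrite -(map_mx_eq0 (@ratr R)) -/(ratmx R q) qE l_eq0 scale0r eqxx.
have [l_gt0|l_le0] := ltP 0 l; first by exists q => //; exists l.
exists (- q); first by rewrite oppr_eq0.
exists (- l); first by rewrite oppr_gt0 lt_neqAle l0.
by rewrite /ratmx map_mxN -/(ratmx R q) qE scaleNr.
Qed.

Lemma elementary_circuit y : elementary y ->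
  exists g, circuit A B g /\ exists2 k : R, 0 < k & y = k *: intcv R g.
Proof.
move=> ey; have [y0 ay ymin] := ey.
have [q q0 [l l_gt0 qE]] := elementary_rat ey.
have [g [c [c_gt0 qg gg]]] := rat_cV_int_scale q0.
have k_gt0 : 0 < l^-1 * ratr c by rewrite mulr_gt0 ?invr_gt0 ?ltr0q.
have yE : y = (l^-1 * ratr c) *: intcv R g.
  apply/colP => i; move/colP: qE => /(_ i); rewrite !mxE qg rmorphM rmorph_int => e.
  by rewrite -mulrA e mulKf ?gt_eqF.
have gE : intcv R g = (l^-1 * ratr c)^-1 *: y by rewrite yE scalerA mulVf ?gt_eqF ?scale1r.
exists g; split; last by exists (l^-1 * ratr c).
split => //.
- by apply: contraNneq y0 => g0; rewrite yE g0; apply/eqP/colP => i; rewrite !mxE mulr0.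
- by rewrite gE -scalemxAr ay scaler0.
- by rewrite gE -scalemxAr suppZ ?invr_eq0 ?gt_eqF.
Qed.

End Rational.

End Cone.

Theorem theorem3 (R : realType) (mA mB n : nat)
    (A0 : 'M[rat]_(mA, n)) (B0 : 'M[rat]_(mB, n))
    (b : 'cV[R]_mA) (d : 'cV[R]_mB) :
  let A := ratmx R A0 in
  let B := ratmx R B0 in
  pointed_poly A B ->
  pointed_cone (coneC A B) /\
  exists I : {set 'I_mB},
    let G := fun z => Sset A B z \/ exists2 i, i \in I & z = Telem R n i in
    [/\ (#|I| <= mB)%N,
        generates G (coneC A B),
        (forall z, G z -> extreme_ray (coneC A B) z) &
        (forall r, extreme_ray (coneC A B) r ->
           exists z, G z /\ exists2 a : R, 0 < a & r = a *: z)].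
Proof.
move=> A B rankAB.
have kerAB0 (x : 'cV[R]_n) : A *m x = 0 -> B *m x = 0 -> x = 0.
  move=> ax bx; apply: mulmx_full_rank_eq0 rankAB _.
  by rewrite mul_col_mx ax bx col_mx0.
split; first exact: coneC_pointed.
pose redundant := [set i : 'I_mB | `[< exists x, A *m x = 0 /\ supp (B *m x) = [set i] >]].
exists (~: redundant) => G.
have GC z : G z -> coneC A B z.
  case=> [[g [/circuit_elementary [_ ag _] ->]]|[i _ ->]]; first exact: lift_coneC ag.
  exact: Telem_coneC.
have Gel y : elementary A B y -> conic_hull G (lift B y).
  move=> /(elementary_circuit kerAB0 erefl erefl) [g [cg [k k_gt0 ->]]].
  have [_ _ hullZ] := conic_hull_is_cone G; rewrite liftZ ?ltW //.
  by apply: hullZ (ltW k_gt0) _; apply: conic_hull_gen; left; exists g.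
have gen : generates G (coneC A B).
  move=> z; split; last exact: conic_hull_min (coneC_is_cone A B) GC z.
  apply: (coneC_conic_hull (I := ~: redundant) kerAB0 Gel) => i;
    last by rewrite !inE => /negPn/asboolP.
  by move=> iI; right; exists i.
split => //.
- by rewrite -[X in (_ <= X)%N]card_ord max_card.
- move=> z [[g [/circuit_elementary eg ->]]|[i iI ->]]; first exact: lift_extreme.
  by apply: Telem_extreme; move: iI; rewrite !inE => /asboolPn.
- exact: extreme_ray_generator (coneC_is_cone A B) GC gen.
Qed.
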